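(* Let $\sigma>0$, $\rho_0\in(0,1)$ and $\rho_1>0$ with $\rho_0\rho_1<1$. Consider random Motzkin paths $(\gamma^{(L)}_0,\dots,\gamma^{(L)}_L)$ sampled from $\Pr_L$ with boundary weights $\alpha_n=\rho_0^n$, $\beta_n=\rho_1^n$ ($n\ge0$), and set $\gamma^{(L)}_k=0$ for $k>L$. Let $\hat\rho=\max\{1,\rho_1\}$. Then, as $L\to\infty$, $\{\gamma^{(L)}_k\}_{k\ge0}\Rightarrow\{Z_k\}_{k\ge0}$ in the sense of finite-dimensional distributions, where $\{Z_k\}$ is a Markov chain with transition probabilities $\mathsf Q^{(\hat\rho)}_{n,m}$ and $Z_0=G+\widetilde G$, with $G,\widetilde G$ independent, $\Pr(G=n)=(1-\rho_0\hat\rho)(\rho_0\hat\rho)^n$ and $\Pr(\widetilde G=n)=(1-\rho_0/\hat\rho)(\rho_0/\hat\rho)^n$, $n\ge0$.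
   Context: A Motzkin path of length $L\ge1$ is a sequence $(\gamma_0,\dots,\gamma_L)$ of non-negative integers with $|\gamma_k-\gamma_{k-1}|\le1$; $\mathcal M^{(L)}$ is the set of all such paths. Weight: $w(\vec\gamma)=\sigma^{\#\{k:\gamma_k=\gamma_{k-1}\}}$. Probability: $\Pr_L(\vec\gamma)=\alpha_{\gamma_0}\beta_{\gamma_L}w(\vec\gamma)/\sum_{\vec\eta\in\mathcal M^{(L)}}\alpha_{\eta_0}\beta_{\eta_L}w(\vec\eta)$. Transition kernels: for $\rho>1$, $$\mathsf Q^{(\rho)}_{n,m}=\frac{1}{\rho+1/\rho+\sigma}\begin{cases}\frac{\rho^{n+2}-\rho^{-(n+2)}}{\rho^{n+1}-\rho^{-(n+1)}}, & m=n+1,\\ \sigma, & m=n,\\ \frac{\rho^{n}-\rho^{-n}}{\rho^{n+1}-\rho^{-(n+1)}}, & m=n-1,\\ 0,&\text{otherwise},\end{cases}$$ and $\mathsf Q^{(1)}_{n,m}$ equals $\frac{1}{2+\sigma}\frac{n+2}{n+1}$ if $m=n+1$, $\frac{\sigma}{2+\sigma}$ if $m=n$, $\frac{1}{2+\sigma}\frac{n}{n+1}$ if $m=n-1\ge0$, and $0$ otherwise. *)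

From Stdlib Require Import Reals List ZArith Arith Lra.
From Coquelicot Require Import Coquelicot.
Import ListNotations.
Open Scope R_scope.

(* A Motzkin path of length L is encoded by its start height h : nat and its
   list of L steps, each in {-1,0,1}; the path must stay non-negative.
   This is a bijection with M^(L). *)
Definition steps : list Z := [(-1)%Z; 0%Z; 1%Z].

Fixpoint step_seqs (L : nat) : list (list Z) :=
  match L with
  | O => [nil]
  | S L' => flat_map (fun s => map (fun d => d :: s) steps) (step_seqs L')
  end.

Fixpoint heights (h : Z) (ds : list Z) : list Z :=
  h :: match ds with nil => nil | d :: ds' => heights (h + d)%Z ds' end.

Definition valid (h : nat) (ds : list Z) : bool :=
  forallb (fun x => Z.leb 0 x) (heights (Z.of_nat h) ds).

(* gamma_k, with gamma_k = 0 for k > L *)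
Definition gam (h : nat) (ds : list Z) (k : nat) : nat :=
  Z.to_nat (nth k (heights (Z.of_nat h) ds) 0%Z).

(* alpha_{gamma_0} beta_{gamma_L} w(gamma), with alpha_n = rho0^n,
   beta_n = rho1^n, w = sigma^{# flat steps} *)
Definition pweight (sigma rho0 rho1 : R) (h : nat) (ds : list Z) : R :=
  rho0 ^ h * rho1 ^ (Z.to_nat (last (heights (Z.of_nat h) ds) 0%Z))
  * sigma ^ (count_occ Z.eq_dec ds 0%Z).

Definition Wh (sigma rho0 rho1 : R) (L : nat)
  (P : nat -> list Z -> bool) (h : nat) : R :=
  fold_right Rplus 0
    (map (fun ds => if andb (valid h ds) (P h ds) then pweight sigma rho0 rho1 h ds else 0)
       (step_seqs L)).

Definition fdd_event (K : nat) (n : nat -> nat) : nat -> list Z -> bool :=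
  fun h ds => forallb (fun k => Nat.eqb (gam h ds k) (n k)) (seq 0 (S K)).

(* Pr_L(gamma_0 = n 0, ..., gamma_K = n K) ; the partition function is the
   (convergent) series over the starting height *)
Definition PrL (sigma rho0 rho1 : R) (L K : nat) (n : nat -> nat) : R :=
  Series (Wh sigma rho0 rho1 L (fdd_event K n))
  / Series (Wh sigma rho0 rho1 L (fun _ _ => true)).

Definition Qker (rho sigma : R) (n m : nat) : R :=
  if Rle_dec rho 1 then
    (if Nat.eqb m (S n) then / (2 + sigma) * (INR (n + 2) / INR (n + 1))
     else if Nat.eqb m n then sigma / (2 + sigma)
     else if Nat.eqb (S m) n then / (2 + sigma) * (INR n / INR (n + 1))
     else 0)
  else
    (if Nat.eqb m (S n) then
       / (rho + / rho + sigma) *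
       ((rho ^ (n + 2) - / rho ^ (n + 2)) / (rho ^ (n + 1) - / rho ^ (n + 1)))
     else if Nat.eqb m n then sigma / (rho + / rho + sigma)
     else if Nat.eqb (S m) n then
       / (rho + / rho + sigma) *
       ((rho ^ n - / rho ^ n) / (rho ^ (n + 1) - / rho ^ (n + 1)))
     else 0).

Definition geom (q : R) (n : nat) : R := (1 - q) * q ^ n.

(* law of Z_0 = G + G~ with G, G~ independent: convolution *)
Definition Z0law (rho0 rhohat : R) (n : nat) : R :=
  sum_f_R0 (fun j => geom (rho0 * rhohat) j * geom (rho0 / rhohat) (n - j)) n.

Fixpoint chain_prod (Q : nat -> nat -> R) (n : nat -> nat) (K : nat) : R :=
  match K with
  | O => 1
  | S K' => chain_prod Q n K' * Q (n K') (n (S K'))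
  end.

Definition Zfdd (sigma rho0 rhohat : R) (K : nat) (n : nat -> nat) : R :=
  Z0law rho0 rhohat (n O) * chain_prod (Qker rhohat sigma) n K.

(* Fixing gamma_0, ..., gamma_K pins down a prefix of the path, so that
     Pr_L(gamma_k = n_k, k <= K) = rho0^(n_0) * prod_k t(n_k, n_(k+1)) * F_(L-K)(n_K) / sum_h rho0^h F_L(h),
   where t(a, b) is 1, sigma, 1 for an up, flat, down step and F_M(h) is the total weight of the
   non-negative paths of length M from h with terminal weight rho1^(end), i.e. F_M = T^M rho1^(.)
   for the transfer operator T of the walk killed below 0.  Everything then rests on asymptotics
   F_M(h) ~ kappa N_M phi(h) with N_(M+1)/N_M -> lambda = rhohat + 1/rhohat + sigma, dominated in h,
   where phi(h) = (rhohat^(h+1) - rhohat^-(h+1)) / (rhohat - 1/rhohat): then t(a,b) phi(b) / (lambda phi(a))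
   is Q^(rhohat), and sum_h rho0^h phi(h) is the inverse normalisation of the law of G + G~.
   For rho1 > 1, rho1^h - rho1^-(h+2) is an exact eigenfunction of T and the rest of the boundary
   data grows only like (2 + sigma)^M.  For rho1 <= 1 the reflection principle writes the killed walk
   through free-walk weights u_M; a three-term recurrence of u_M in the endpoint, started by a
   contraction for the imbalance of u_M(0) and u_M(1), gives u_M(k) / (u_M(0) + u_M(1)) -> 1/2 for
   every k, hence F_M(h) proportional to h + 1 in the limit. *)

From Stdlib Require Import Bool Reals List ZArith Lra Lia.
From Coquelicot Require Import Coquelicot.
Open Scope bool_scope.
Open Scope R_scope.

Definition sum_steps (L : nat) (g : list Z -> R) : R :=
  fold_right Rplus 0 (map g (step_seqs L)).

Lemma sum_steps_S L g :
  sum_steps (S L) g =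
  sum_steps L (fun s => g ((-1)%Z :: s) + g (0%Z :: s) + g (1%Z :: s)).
Proof.
  unfold sum_steps; simpl.
  induction (step_seqs L) as [|s l IH]; simpl in *; [reflexivity|].
  rewrite IH; ring.
Qed.

Lemma sum_steps_ext L g1 g2 : (forall s, g1 s = g2 s) -> sum_steps L g1 = sum_steps L g2.
Proof. intros E; unfold sum_steps; f_equal; apply map_ext, E. Qed.

Lemma sum_steps_add L g1 g2 :
  sum_steps L (fun s => g1 s + g2 s) = sum_steps L g1 + sum_steps L g2.
Proof. unfold sum_steps; induction (step_seqs L); simpl; [ring|]; rewrite IHl; ring. Qed.

Lemma sum_steps_scal L c g : sum_steps L (fun s => c * g s) = c * sum_steps L g.
Proof. unfold sum_steps; induction (step_seqs L); simpl; [ring|]; rewrite IHl; ring. Qed.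

Lemma sum_steps_eq0 L g : (forall s, g s = 0) -> sum_steps L g = 0.
Proof. intros E; unfold sum_steps; induction (step_seqs L); simpl; [ring|]; rewrite IHl, E; ring. Qed.

Section PathWeights.

Variables sigma rho1 : R.

Definition nonneg_path (z : Z) (ds : list Z) : bool :=
  forallb (fun x => Z.leb 0 x) (heights z ds).

Definition path_weight (z : Z) (ds : list Z) : R :=
  rho1 ^ Z.to_nat (last (heights z ds) 0%Z) * sigma ^ count_occ Z.eq_dec ds 0%Z.

Definition heights_are (K : nat) (n : nat -> nat) (z : Z) (ds : list Z) : bool :=
  forallb (fun k => Nat.eqb (Z.to_nat (nth k (heights z ds) 0%Z)) (n k)) (seq 0 (S K)).

Definition total_weight (L : nat) (z : Z) : R :=
  sum_steps L (fun ds => if nonneg_path z ds then path_weight z ds else 0).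

Definition event_weight (L K : nat) (n : nat -> nat) (z : Z) : R :=
  sum_steps L (fun ds => if nonneg_path z ds && heights_are K n z ds then path_weight z ds else 0).

Lemma nonneg_path_cons z d s : nonneg_path z (d :: s) = Z.leb 0 z && nonneg_path (z + d) s.
Proof. reflexivity. Qed.

Lemma path_weight_cons z d s :
  path_weight z (d :: s) = path_weight (z + d) s * (if Z.eq_dec d 0 then sigma else 1).
Proof.
  unfold path_weight; simpl heights; simpl count_occ.
  replace (last (z :: heights (z + d) s) 0%Z) with (last (heights (z + d) s) 0%Z)
    by (destruct s; reflexivity).
  destruct (Z.eq_dec d 0); simpl; ring.
Qed.

Lemma forallb_seq_shift (f : nat -> bool) a m :
  forallb f (seq (S a) m) = forallb (fun k => f (S k)) (seq a m).
Proof. revert a; induction m; intros a; simpl; [reflexivity|]; rewrite IHm; reflexivity. Qed.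

Lemma heights_are_cons K n z d s :
  heights_are (S K) n z (d :: s) =
  Nat.eqb (Z.to_nat z) (n 0%nat) && heights_are K (fun k => n (S k)) (z + d) s.
Proof.
  unfold heights_are; change (seq 0 (S (S K))) with (0%nat :: seq 1 (S K)).
  simpl forallb at 1; rewrite forallb_seq_shift; reflexivity.
Qed.

Lemma heights_are_0 n z ds : heights_are 0 n z ds = Nat.eqb (Z.to_nat z) (n 0%nat).
Proof. unfold heights_are; simpl; destruct ds; apply andb_true_r. Qed.

Lemma total_weight_0 z : total_weight 0 z = if Z.leb 0 z then rho1 ^ Z.to_nat z else 0.
Proof.
  unfold total_weight, sum_steps, nonneg_path, path_weight; simpl.
  destruct (Z.leb 0 z); simpl; ring.
Qed.

Lemma total_weight_S L z :
  total_weight (S L) z =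
  if Z.leb 0 z
  then total_weight L (z - 1) + sigma * total_weight L z + total_weight L (z + 1)
  else 0.
Proof.
  unfold total_weight; rewrite sum_steps_S.
  destruct (Z.leb 0 z) eqn:Hz.
  - rewrite <- sum_steps_scal, <- !sum_steps_add; apply sum_steps_ext; intros s.
    rewrite !nonneg_path_cons, Hz, !path_weight_cons.
    replace (z + -1)%Z with (z - 1)%Z by lia; replace (z + 0)%Z with z by lia; simpl.
    destruct (nonneg_path (z - 1) s), (nonneg_path z s), (nonneg_path (z + 1) s); ring.
  - apply sum_steps_eq0; intros s.
    rewrite !nonneg_path_cons, Hz; simpl; ring.
Qed.

Lemma total_weight_neg L z : (z < 0)%Z -> total_weight L z = 0.
Proof.
  intros Hz; assert (E : Z.leb 0 z = false) by (apply Z.leb_gt; lia).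
  destruct L; [rewrite total_weight_0 | rewrite total_weight_S]; rewrite E; reflexivity.
Qed.

Lemma event_weight_0 L n z :
  event_weight L 0 n z = if Nat.eqb (Z.to_nat z) (n 0%nat) then total_weight L z else 0.
Proof.
  unfold event_weight, total_weight; destruct (Nat.eqb (Z.to_nat z) (n 0%nat)) eqn:E.
  - apply sum_steps_ext; intros s; rewrite heights_are_0, E, andb_true_r; reflexivity.
  - apply sum_steps_eq0; intros s.
    rewrite heights_are_0, E, andb_false_r; reflexivity.
Qed.

Lemma event_weight_S L K n z :
  event_weight (S L) (S K) n z =
  if Z.leb 0 z && Nat.eqb (Z.to_nat z) (n 0%nat) then
    let n' := fun k => n (S k) in
    event_weight L K n' (z - 1) + sigma * event_weight L K n' z + event_weight L K n' (z + 1)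
  else 0.
Proof.
  unfold event_weight; rewrite sum_steps_S; cbv zeta.
  destruct (Z.leb 0 z) eqn:Hz, (Nat.eqb (Z.to_nat z) (n 0%nat)) eqn:Hn; simpl andb;
    [|apply sum_steps_eq0; intros s;
      rewrite !nonneg_path_cons, !heights_are_cons, Hz, Hn; simpl; rewrite ?andb_false_r; ring..].
  rewrite <- sum_steps_scal, <- !sum_steps_add; apply sum_steps_ext; intros s.
  rewrite !nonneg_path_cons, !heights_are_cons, !path_weight_cons, Hz, Hn; simpl andb.
  replace (z + -1)%Z with (z - 1)%Z by lia; replace (z + 0)%Z with z by lia; simpl.
  destruct (nonneg_path (z - 1) s && _), (nonneg_path z s && _), (nonneg_path (z + 1) s && _); ring.
Qed.

End PathWeights.

Section Transfer.

Variable sigma : R.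

Fixpoint transfer (b : nat -> R) (M h : nat) {struct M} : R :=
  match M with
  | O => b h
  | S M' =>
      match h with
      | O => sigma * transfer b M' 0 + transfer b M' 1
      | S h' => transfer b M' h' + sigma * transfer b M' (S h') + transfer b M' (S (S h'))
      end
  end.

Lemma eq_transfer b (G : nat -> nat -> R) :
  (forall h, G 0%nat h = b h) ->
  (forall M, G (S M) 0%nat = sigma * G M 0%nat + G M 1%nat) ->
  (forall M h, G (S M) (S h) = G M h + sigma * G M (S h) + G M (S (S h))) ->
  forall M h, G M h = transfer b M h.
Proof.
  intros H0 H1 H2 M; induction M; intros h; simpl; [apply H0|].
  destruct h; [rewrite H1 | rewrite H2]; rewrite !IHM; reflexivity.
Qed.

Lemma transfer_local b1 b2 B M h :
  (forall x, (x <= B)%nat -> b1 x = b2 x) -> (h + M <= B)%nat ->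
  transfer b1 M h = transfer b2 M h.
Proof.
  intros E; revert h; induction M; intros h Hh; simpl; [apply E; lia|].
  destruct h; rewrite !IHM by lia; reflexivity.
Qed.

Lemma transfer_ext b1 b2 M h : (forall x, b1 x = b2 x) -> transfer b1 M h = transfer b2 M h.
Proof. intros E; apply (transfer_local _ _ (h + M)); auto. Qed.

Lemma transfer_eq0 b M h : (forall x, (x <= h + M)%nat -> b x = 0) -> transfer b M h = 0.
Proof.
  revert h; induction M; intros h E; simpl; [apply E; lia|].
  destruct h; rewrite !IHM by (intros; apply E; lia); ring.
Qed.

Lemma transfer_add b1 b2 M h :
  transfer (fun x => b1 x + b2 x) M h = transfer b1 M h + transfer b2 M h.
Proof. revert h; induction M; intros h; simpl; [reflexivity|]; destruct h; rewrite !IHM; ring. Qed.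

Lemma transfer_scal c b M h : transfer (fun x => c * b x) M h = c * transfer b M h.
Proof. revert h; induction M; intros h; simpl; [reflexivity|]; destruct h; rewrite !IHM; ring. Qed.

Lemma transfer_eigen psi mu M h :
  sigma * psi 0%nat + psi 1%nat = mu * psi 0%nat ->
  (forall h, psi h + sigma * psi (S h) + psi (S (S h)) = mu * psi (S h)) ->
  transfer psi M h = mu ^ M * psi h.
Proof.
  intros H0 H1; symmetry; revert M h; apply eq_transfer.
  - intros; simpl; ring.
  - intros M; simpl; replace (mu * mu ^ M * psi 0%nat) with (mu ^ M * (mu * psi 0%nat)) by ring.
    rewrite <- H0; ring.
  - intros M x; simpl; replace (mu * mu ^ M * psi (S x)) with (mu ^ M * (mu * psi (S x))) by ring.
    rewrite <- H1; ring.
Qed.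

Hypothesis sigma_ge0 : 0 <= sigma.

Lemma transfer_ge0 b M h : (forall x, 0 <= b x) -> 0 <= transfer b M h.
Proof.
  intros Hb; revert h; induction M; intros h; simpl; [apply Hb|].
  destruct h.
  - pose proof (IHM 0%nat); pose proof (IHM 1%nat); nra.
  - pose proof (IHM h); pose proof (IHM (S h)); pose proof (IHM (S (S h))); nra.
Qed.

(* [x ^ h] is a supersolution: one step multiplies it by at most [x + /x + sigma]. *)
Lemma transfer_le_geom b x M h :
  0 < x -> (forall h, 0 <= b h <= x ^ h) -> transfer b M h <= (x + / x + sigma) ^ M * x ^ h.
Proof.
  intros Hx Hb; revert h; induction M; intros h; [simpl; rewrite Rmult_1_l; apply Hb|].
  set (lam := x + / x + sigma) in *.
  assert (Hlow : 0 <= lam ^ M * / x * x ^ h).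
  { pose proof (Rinv_0_lt_compat x Hx); pose proof (pow_le x h ltac:(lra)).
    apply Rmult_le_pos; [apply Rmult_le_pos; [apply pow_le; unfold lam|]|]; lra. }
  replace (lam ^ S M * x ^ h) with (lam ^ M * (x ^ h * x + sigma * x ^ h) + lam ^ M * / x * x ^ h)
    by (unfold lam; simpl; field; lra).
  destruct h as [|h]; simpl transfer.
  - pose proof (IHM 0%nat) as I0; pose proof (IHM 1%nat) as I1; simpl in *.
    pose proof (Rmult_le_compat_l sigma _ _ sigma_ge0 I0); nra.
  - pose proof (IHM h) as I0; pose proof (IHM (S h)) as I1; pose proof (IHM (S (S h))) as I2.
    simpl in *; pose proof (Rmult_le_compat_l sigma _ _ sigma_ge0 I1).
    replace (lam ^ M * / x * (x * x ^ h)) with (lam ^ M * x ^ h) in Hlow |- * by (field; lra).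
    nra.
Qed.

Lemma transfer_pow_bounded x M h :
  0 <= x <= 1 -> 0 <= transfer (pow x) M h <= (2 + sigma) ^ M.
Proof.
  intros Hx; split; [apply transfer_ge0; intros; apply pow_le; lra|].
  replace (2 + sigma) with (1 + / 1 + sigma) by (rewrite Rinv_1; ring).
  replace ((1 + / 1 + sigma) ^ M) with ((1 + / 1 + sigma) ^ M * 1 ^ h) by (rewrite pow1; ring).
  apply transfer_le_geom; [lra|]; intros k; rewrite pow1.
  split; [apply pow_le; lra | rewrite <- (pow1 k); apply pow_incr; lra].
Qed.

End Transfer.



Lemma total_weight_transfer sigma rho1 M h :
  total_weight sigma rho1 M (Z.of_nat h) = transfer sigma (pow rho1) M h.
Proof.
  revert M h; apply eq_transfer.
  - intros h; rewrite total_weight_0, Nat2Z.id.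
    replace (Z.leb 0 (Z.of_nat h)) with true by (symmetry; apply Z.leb_le; lia); reflexivity.
  - intros M; rewrite total_weight_S, (total_weight_neg _ _ _ (Z.of_nat 0 - 1)) by lia; simpl; ring.
  - intros M h; rewrite total_weight_S.
    replace (Z.leb 0 (Z.of_nat (S h))) with true by (symmetry; apply Z.leb_le; lia).
    replace (Z.of_nat (S h) - 1)%Z with (Z.of_nat h) by lia.
    replace (Z.of_nat (S h) + 1)%Z with (Z.of_nat (S (S h))) by lia; reflexivity.
Qed.

Definition step_weight (sigma : R) (a b : nat) : R :=
  if Nat.eqb b (S a) then 1
  else if Nat.eqb b a then sigma
  else if Nat.eqb (S b) a then 1
  else 0.

Lemma step_weight_sum sigma a b P :
  (if Z.leb 0 (Z.of_nat a - 1) && Nat.eqb (Z.to_nat (Z.of_nat a - 1)) b then P else 0)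
  + sigma * (if Z.leb 0 (Z.of_nat a) && Nat.eqb (Z.to_nat (Z.of_nat a)) b then P else 0)
  + (if Z.leb 0 (Z.of_nat a + 1) && Nat.eqb (Z.to_nat (Z.of_nat a + 1)) b then P else 0)
  = step_weight sigma a b * P.
Proof.
  unfold step_weight.
  repeat match goal with
  | |- context [Nat.eqb ?x ?y] => destruct (Nat.eqb_spec x y)
  | |- context [Z.leb ?x ?y] => destruct (Z.leb_spec x y)
  end; simpl; try lia; ring.
Qed.

Lemma chain_prod_S Q n K :
  chain_prod Q n (S K) = Q (n 0%nat) (n 1%nat) * chain_prod Q (fun k => n (S k)) K.
Proof. induction K; simpl in *; [ring|]; rewrite IHK; ring. Qed.

Lemma event_weight_closed sigma rho1 K L n z : (K <= L)%nat ->
  event_weight sigma rho1 L K n z =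
  if Z.leb 0 z && Nat.eqb (Z.to_nat z) (n 0%nat)
  then chain_prod (step_weight sigma) n K * transfer sigma (pow rho1) (L - K) (n K)
  else 0.
Proof.
  revert L n z; induction K as [|K IHK]; intros L n z HKL.
  - rewrite event_weight_0, Nat.sub_0_r; simpl chain_prod.
    destruct (Z.leb_spec 0 z), (Nat.eqb_spec (Z.to_nat z) (n 0%nat)) as [E|E]; simpl; try ring.
    + rewrite <- total_weight_transfer, <- E, Z2Nat.id by lia; ring.
    + apply total_weight_neg; lia.
  - destruct L as [|L]; [lia|].
    rewrite event_weight_S; cbv zeta; rewrite !IHK by lia.
    destruct (Z.leb 0 z && Nat.eqb (Z.to_nat z) (n 0%nat)) eqn:E; [|reflexivity].
    apply andb_prop in E; destruct E as [E1 E2%Nat.eqb_eq]; apply Z.leb_le in E1.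
    replace z with (Z.of_nat (n 0%nat)) by lia.
    rewrite step_weight_sum, chain_prod_S; simpl (S L - S K)%nat; ring.
Qed.

Lemma Wh_eq sigma rho0 rho1 L P h :
  Wh sigma rho0 rho1 L P h =
  rho0 ^ h * sum_steps L (fun ds =>
    if nonneg_path (Z.of_nat h) ds && P h ds then path_weight sigma rho1 (Z.of_nat h) ds else 0).
Proof.
  unfold Wh; rewrite <- sum_steps_scal; apply sum_steps_ext; intros ds.
  unfold valid, pweight, nonneg_path, path_weight; destruct (_ && _); ring.
Qed.

Lemma is_series_finite (f : nat -> R) N :
  (forall k, (N < k)%nat -> f k = 0) -> is_series f (sum_f_R0 f N).
Proof.
  intros H; apply is_series_Reals; intros eps Heps; exists N; intros m Hm.
  replace (sum_f_R0 f m) with (sum_f_R0 f N).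
  - unfold R_dist; rewrite Rminus_diag, Rabs_R0; exact Heps.
  - induction Hm; [reflexivity|]; rewrite tech5, <- IHHm, H by lia; ring.
Qed.

Lemma Series_indicator (a : nat) (c : R) : Series (fun h => if Nat.eqb h a then c else 0) = c.
Proof.
  assert (Hsum : sum_f_R0 (fun h => if Nat.eqb h a then c else 0) a = c).
  { destruct a as [|a]; simpl; [reflexivity|].
    rewrite Nat.eqb_refl, sum_eq_R0; [ring|].
    intros k Hk; destruct (Nat.eqb_spec k (S a)); [lia|reflexivity]. }
  apply is_series_unique; pattern c at 2; rewrite <- Hsum; apply is_series_finite.
  intros k Hk; destruct (Nat.eqb_spec k a); [lia|reflexivity].
Qed.

Lemma PrL_eq sigma rho0 rho1 L K n : (K <= L)%nat ->
  PrL sigma rho0 rho1 L K n =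
  rho0 ^ n 0%nat * chain_prod (step_weight sigma) n K * transfer sigma (pow rho1) (L - K) (n K)
  / Series (fun h => rho0 ^ h * transfer sigma (pow rho1) L h).
Proof.
  intros HKL; unfold PrL; f_equal.
  - rewrite <- (Series_indicator (n 0%nat)); apply Series_ext; intros h.
    rewrite Wh_eq; change (sum_steps L _) with (event_weight sigma rho1 L K n (Z.of_nat h)).
    rewrite event_weight_closed, Nat2Z.id by exact HKL.
    replace (Z.leb 0 (Z.of_nat h)) with true by (symmetry; apply Z.leb_le; lia).
    destruct (Nat.eqb_spec h (n 0%nat)); simpl; [subst|]; ring.
  - apply Series_ext; intros h; rewrite Wh_eq, <- total_weight_transfer; f_equal.
    apply sum_steps_ext; intros ds; rewrite andb_true_r; reflexivity.
Qed.

Lemma is_lim_seq_scal_l_fin (u : nat -> R) (a l : R) :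
  is_lim_seq u l -> is_lim_seq (fun n => a * u n) (a * l).
Proof. exact (is_lim_seq_scal_l u a l). Qed.

Lemma is_lim_seq_inv_INR_plus b : is_lim_seq (fun M => / (INR M + b)) 0.
Proof.
  replace (Finite 0) with (Rbar_inv p_infty) by reflexivity.
  apply is_lim_seq_inv; [|discriminate].
  eapply is_lim_seq_plus; [apply is_lim_seq_INR | apply is_lim_seq_const | reflexivity].
Qed.

Lemma is_lim_seq_INR_ratio a b : is_lim_seq (fun M => (INR M + a) / (INR M + b)) 1.
Proof.
  apply is_lim_seq_ext_loc with (fun M => 1 + (a - b) * / (INR M + b)).
  - destruct (INR_unbounded (Rabs b)) as [N HN]; exists (S N); intros M HM.
    assert (INR N <= INR M) by (apply le_INR; lia).
    assert (0 < INR M + b) by (pose proof (Rle_abs (- b)); rewrite Rabs_Ropp in *; lra).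
    field; lra.
  - replace (Finite 1) with (Finite (1 + (a - b) * 0)) by (f_equal; ring).
    apply is_lim_seq_plus'; [apply is_lim_seq_const|].
    apply is_lim_seq_scal_l_fin, is_lim_seq_inv_INR_plus.
Qed.

Lemma is_lim_seq_contraction (a e : nat -> R) q :
  0 <= q < 1 -> (forall n, 0 <= a n) -> (forall n, a (S n) <= q * a n + e n) ->
  is_lim_seq e 0 -> is_lim_seq a 0.
Proof.
  intros Hq Ha Hrec He; apply is_lim_seq_spec in He; apply is_lim_seq_spec; intros eps.
  assert (Hp : 0 < eps * (1 - q) / 2) by (pose proof (cond_pos eps); apply Rdiv_lt_0_compat; nra).
  destruct (He (mkposreal _ Hp)) as [N HN]; simpl in HN.
  assert (Hb : forall k, a (k + N)%nat <= q ^ k * a N + eps / 2).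
  { induction k; simpl.
    - pose proof (cond_pos eps); lra.
    - specialize (HN (k + N)%nat ltac:(lia)); rewrite Rminus_0_r in HN.
      apply Rabs_def2 in HN; specialize (Hrec (k + N)%nat).
      assert (q * a (k + N)%nat <= q * (q ^ k * a N + eps / 2)) by (apply Rmult_le_compat_l; lra).
      nra. }
  assert (Hg : is_lim_seq (fun k => q ^ k * a N) 0).
  { replace (Finite 0) with (Finite (0 * a N)) by (f_equal; ring).
    apply (is_lim_seq_scal_r _ (a N) 0), is_lim_seq_geom.
    rewrite Rabs_pos_eq; lra. }
  apply is_lim_seq_spec in Hg.
  assert (He2 : 0 < eps / 2) by (pose proof (cond_pos eps); lra).
  destruct (Hg (mkposreal _ He2)) as [K HK]; simpl in HK.
  exists (K + N)%nat; intros n Hn; replace n with ((n - N) + N)%nat by lia.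
  specialize (HK (n - N)%nat ltac:(lia)); specialize (Hb (n - N)%nat).
  rewrite Rminus_0_r in HK |- *; apply Rabs_def2 in HK.
  specialize (Ha ((n - N) + N)%nat); rewrite Rabs_pos_eq by lra; lra.
Qed.

Lemma is_lim_seq_sum_f_R0 (f : nat -> nat -> R) (g : nat -> R) N :
  (forall j, is_lim_seq (fun M => f M j) (g j)) ->
  is_lim_seq (fun M => sum_f_R0 (f M) N) (sum_f_R0 g N).
Proof.
  intros H; induction N; simpl; [apply H|].
  apply is_lim_seq_plus'; [exact IHN | apply H].
Qed.

Lemma is_lim_seq_partial_sums (a : nat -> R) l :
  is_series a l -> is_lim_seq (fun n => sum_f_R0 a n) l.
Proof.
  intros H; apply is_lim_seq_ext with (sum_n a); [intros n; apply sum_n_Reals | exact H].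
Qed.

Lemma Series_tail_le (a D : nat -> R) N :
  (forall k, Rabs (a k) <= D k) -> ex_series D ->
  Rabs (Series a - sum_f_R0 a N) <= Series D - sum_f_R0 D N.
Proof.
  intros H HD; assert (Ha : ex_series a) by (apply (ex_series_le a D); assumption).
  assert (Hfin : forall n, Rabs (sum_f_R0 a (n + N) - sum_f_R0 a N) <= sum_f_R0 D (n + N) - sum_f_R0 D N).
  { induction n; simpl.
    - rewrite Rminus_diag, Rabs_R0; lra.
    - replace (sum_f_R0 a (n + N) + a (S (n + N)) - sum_f_R0 a N)
        with ((sum_f_R0 a (n + N) - sum_f_R0 a N) + a (S (n + N))) by ring.
      eapply Rle_trans; [apply Rabs_triang|]; specialize (H (S (n + N))); lra. }
  refine (is_lim_seq_le _ _ (Rabs (Series a - sum_f_R0 a N)) (Series D - sum_f_R0 D N) Hfin _ _).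
  - apply (is_lim_seq_abs _ (Series a - sum_f_R0 a N)).
    apply is_lim_seq_minus'; [|apply is_lim_seq_const].
    apply (is_lim_seq_incr_n (fun n => sum_f_R0 a n) N), is_lim_seq_partial_sums, Series_correct, Ha.
  - apply is_lim_seq_minus'; [|apply is_lim_seq_const].
    apply (is_lim_seq_incr_n (fun n => sum_f_R0 D n) N), is_lim_seq_partial_sums, Series_correct, HD.
Qed.

(* Split off a tail that is small uniformly in M. *)
Lemma is_lim_seq_Series_dominated (f : nat -> nat -> R) (g D : nat -> R) :
  (forall h, is_lim_seq (fun M => f M h) (g h)) ->
  (forall M h, Rabs (f M h) <= D h) -> ex_series D ->
  is_lim_seq (fun M => Series (f M)) (Series g).
Proof.
  intros Hl Hb HD.
  assert (Hg : forall h, Rabs (g h) <= D h).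
  { intros h; refine (is_lim_seq_le _ _ (Rabs (g h)) (D h) (fun M => Hb M h) _ (is_lim_seq_const _)).
    apply (is_lim_seq_abs _ (g h)), Hl. }
  apply is_lim_seq_spec; intros eps.
  assert (He3 : 0 < eps / 3) by (pose proof (cond_pos eps); lra).
  assert (HT := is_lim_seq_partial_sums D _ (Series_correct D HD)).
  apply is_lim_seq_spec in HT; destruct (HT (mkposreal _ He3)) as [N HN]; simpl in HN.
  specialize (HN N (le_n N)).
  assert (HF := is_lim_seq_sum_f_R0 f g N Hl); apply is_lim_seq_spec in HF.
  destruct (HF (mkposreal _ He3)) as [M0 HM0]; simpl in HM0.
  exists M0; intros M HM; specialize (HM0 M HM).
  pose proof (Series_tail_le (f M) D N (Hb M) HD) as T1.
  pose proof (Series_tail_le g D N Hg HD) as T2.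
  apply Rabs_def2 in HN; apply Rabs_def2 in HM0.
  apply Rabs_le_between in T1; apply Rabs_le_between in T2.
  apply Rabs_def1; lra.
Qed.

Lemma Series_ge0 (a : nat -> R) : (forall n, 0 <= a n) -> ex_series a -> 0 <= Series a.
Proof.
  intros Ha Hex; replace 0 with (Series (fun n => 0 * a n)) by (rewrite Series_scal_l; ring).
  apply Series_le; [intros n; specialize (Ha n); split; lra | exact Hex].
Qed.

Lemma is_lim_seq_ratio_shift (N : nat -> R) lam K :
  (forall M, 0 < N M) -> 0 < lam -> is_lim_seq (fun M => N (S M) / N M) lam ->
  is_lim_seq (fun L => N L / N (L + K)%nat) (/ lam ^ K).
Proof.
  intros HN Hlam Hrat; induction K as [|K IH].
  - apply is_lim_seq_ext with (fun _ => 1); [intros L; rewrite Nat.add_0_r; specialize (HN L); field; lra|].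
    rewrite pow_O, Rinv_1; apply is_lim_seq_const.
  - apply is_lim_seq_ext with (fun L => N L / N (L + K)%nat * / (N (S (L + K)) / N (L + K)%nat)).
    + intros L; rewrite Nat.add_succ_r; pose proof (HN L); pose proof (HN (L + K)%nat).
      pose proof (HN (S (L + K))); field; lra.
    + replace (/ lam ^ S K) with (/ lam ^ K * / lam) by (simpl; field; split; [apply pow_nonzero|]; lra).
      apply is_lim_seq_mult'; [exact IH|].
      apply (is_lim_seq_inv _ lam); [|intros E; injection E; lra].
      apply (is_lim_seq_incr_n (fun M => N (S M) / N M) K), Hrat.
Qed.

Lemma sum_f_R0_indicator (c : nat -> R) x B :
  (x <= B)%nat -> sum_f_R0 (fun e => c e * (if Nat.eqb x e then 1 else 0)) B = c x.
Proof.
  induction B as [|B IH]; intros Hx; simpl.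
  - replace x with 0%nat by lia; simpl; ring.
  - destruct (Nat.eqb_spec x (S B)).
    + subst; rewrite sum_eq_R0; [ring|]; intros e He; destruct (Nat.eqb_spec (S B) e); [lia | ring].
    + rewrite IH by lia; ring.
Qed.

Section FreeWalk.

Variable sigma : R.

Fixpoint free_walk (M : nat) (d : Z) {struct M} : R :=
  match M with
  | O => if Z.eqb d 0 then 1 else 0
  | S M' => free_walk M' (d - 1) + sigma * free_walk M' d + free_walk M' (d + 1)
  end.

Lemma free_walk_opp M d : free_walk M (- d) = free_walk M d.
Proof.
  revert d; induction M; intros d; simpl.
  - destruct (Z.eqb_spec (- d) 0), (Z.eqb_spec d 0); try lia; reflexivity.
  - replace (- d - 1)%Z with (- (d + 1))%Z by lia; replace (- d + 1)%Z with (- (d - 1))%Z by lia.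
    rewrite !IHM; ring.
Qed.

Definition killed_walk (M h e : nat) : R := transfer sigma (fun x => if Nat.eqb x e then 1 else 0) M h.

(* Reflection principle: paths from h to e hitting -1 correspond to paths from -h-2 to e. *)
Lemma killed_walk_reflection M h e :
  killed_walk M h e =
  free_walk M (Z.of_nat e - Z.of_nat h) - free_walk M (Z.of_nat e + Z.of_nat h + 2).
Proof.
  symmetry; revert M h; apply eq_transfer.
  - intros h; simpl.
    destruct (Z.eqb_spec (Z.of_nat e - Z.of_nat h) 0), (Z.eqb_spec (Z.of_nat e + Z.of_nat h + 2) 0),
      (Nat.eqb_spec h e); try lia; ring.
  - intros M; simpl Z.of_nat; simpl free_walk; rewrite ?Z.sub_0_r, ?Z.add_0_r.
    replace (Z.of_nat e + 2 - 1)%Z with (Z.of_nat e + 1)%Z by lia.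
    replace (Z.of_nat e + 2 + 1)%Z with (Z.of_nat e + 1 + 2)%Z by lia; ring.
  - intros M h; rewrite !Nat2Z.inj_succ; simpl free_walk.
    set (x := Z.of_nat e); set (y := Z.of_nat h).
    replace (x - Z.succ y - 1)%Z with (x - Z.succ (Z.succ y))%Z by lia.
    replace (x - Z.succ y + 1)%Z with (x - y)%Z by lia.
    replace (x + Z.succ y + 2 - 1)%Z with (x + y + 2)%Z by lia.
    replace (x + Z.succ y + 2 + 1)%Z with (x + Z.succ (Z.succ y) + 2)%Z by lia; ring.
Qed.

(* A holonomic recurrence in the endpoint, preserved by the step of the walk. *)
Lemma free_walk_endpoint_rec M k :
  (INR M + IZR k + 2) * free_walk M (k + 2) - (INR M - IZR k) * free_walk M k
  + sigma * (IZR k + 1) * free_walk M (k + 1) = 0.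
Proof.
  revert k; induction M; intros k.
  - simpl; destruct (Z.eqb_spec (k + 2) 0), (Z.eqb_spec k 0), (Z.eqb_spec (k + 1) 0); try lia.
    + replace k with (-2)%Z by lia; simpl; ring.
    + subst; simpl; ring.
    + replace k with (-1)%Z by lia; simpl; ring.
    + ring.
  - pose proof (IHM (k - 1)%Z) as H1; pose proof (IHM k) as H2; pose proof (IHM (k + 1)%Z) as H3.
    rewrite minus_IZR in H1; rewrite plus_IZR in H3.
    replace (k - 1 + 2)%Z with (k + 1)%Z in H1 by lia; replace (k - 1 + 1)%Z with k in H1 by lia.
    replace (k + 1 + 2)%Z with (k + 3)%Z in H3 by lia; replace (k + 1 + 1)%Z with (k + 2)%Z in H3 by lia.
    simpl free_walk; rewrite S_INR.
    replace (k + 2 - 1)%Z with (k + 1)%Z by lia; replace (k + 2 + 1)%Z with (k + 3)%Z by lia.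
    replace (k + 1 - 1)%Z with k by lia; replace (k + 1 + 1)%Z with (k + 2)%Z by lia.
    match type of H1 with ?a1 = _ => match type of H2 with ?a2 = _ => match type of H3 with ?a3 = _ =>
      transitivity (a1 + sigma * a2 + a3); [ring | rewrite H1, H2, H3; ring] end end end.
Qed.

Definition free_walk_at (M k : nat) : R := free_walk M (Z.of_nat k).

Definition central_weight (M : nat) : R := free_walk_at M 0 + free_walk_at M 1.

Lemma free_walk_at_S0 M : free_walk_at (S M) 0 = sigma * free_walk_at M 0 + 2 * free_walk_at M 1.
Proof.
  unfold free_walk_at; simpl free_walk.
  replace (-1)%Z with (- (1))%Z by reflexivity; rewrite free_walk_opp; simpl; ring.
Qed.

Lemma free_walk_at_SS M j :
  free_walk_at (S M) (S j) =
  free_walk_at M j + sigma * free_walk_at M (S j) + free_walk_at M (S (S j)).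
Proof.
  unfold free_walk_at; change (free_walk (S M) ?d) with
    (free_walk M (d - 1) + sigma * free_walk M d + free_walk M (d + 1)).
  replace (Z.of_nat (S j) - 1)%Z with (Z.of_nat j) by lia.
  replace (Z.of_nat (S j) + 1)%Z with (Z.of_nat (S (S j))) by lia; reflexivity.
Qed.

Lemma free_walk_at_gap M k :
  free_walk_at M k - free_walk_at M (k + 2) =
  (INR k + 1) * (2 * free_walk_at M k + sigma * free_walk_at M (S k)) / (INR M + INR k + 2).
Proof.
  unfold free_walk_at; pose proof (free_walk_endpoint_rec M (Z.of_nat k)) as H.
  rewrite <- INR_IZR_INZ in H.
  replace (Z.of_nat (k + 2)) with (Z.of_nat k + 2)%Z by lia.
  replace (Z.of_nat (S k)) with (Z.of_nat k + 1)%Z by lia.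
  pose proof (pos_INR M); pose proof (pos_INR k).
  field_simplify_eq; lra.
Qed.

Lemma killed_walk_eq0 M h e : (h + M < e)%nat -> killed_walk M h e = 0.
Proof. intros He; apply transfer_eq0; intros x Hx; destruct (Nat.eqb_spec x e); [lia | reflexivity]. Qed.

Lemma transfer_as_series b M h :
  is_series (fun e => b e * killed_walk M h e) (transfer sigma b M h).
Proof.
  set (delta := fun e x : nat => if Nat.eqb x e then 1 else 0).
  assert (Hlin : forall B, transfer sigma (fun x => sum_f_R0 (fun e => b e * delta e x) B) M h
                         = sum_f_R0 (fun e => b e * killed_walk M h e) B).
  { induction B as [|B IH]; cbn [sum_f_R0]; [apply transfer_scal|].
    rewrite transfer_add, transfer_scal, IH; reflexivity. }
  rewrite (transfer_local sigma b (fun x => sum_f_R0 (fun e => b e * delta e x) (h + M)) (h + M)).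
  - rewrite Hlin; apply is_series_finite; intros e He; rewrite killed_walk_eq0 by lia; ring.
  - intros x Hx; unfold delta; rewrite sum_f_R0_indicator by lia; reflexivity.
  - lia.
Qed.

Lemma transfer_pow1 M h :
  transfer sigma (pow 1) M h = sum_f_R0 (fun j => free_walk_at M j + free_walk_at M (S j)) h.
Proof.
  symmetry; revert M h; apply eq_transfer.
  - intros h; rewrite pow1; induction h as [|h IH]; [|rewrite tech5, IH];
      unfold free_walk_at; simpl; ring.
  - intros M; simpl; rewrite free_walk_at_S0, (free_walk_at_SS M 0); ring.
  - intros M h; induction h as [|h IH].
    + simpl; rewrite free_walk_at_S0, !free_walk_at_SS; ring.
    + rewrite (tech5 _ (S h)), IH, !tech5; rewrite !free_walk_at_SS; ring.
Qed.

Hypothesis sigma_pos : 0 < sigma.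

Lemma free_walk_ge0 M d : 0 <= free_walk M d.
Proof.
  revert d; induction M; intros d; simpl.
  - destruct (Z.eqb d 0); lra.
  - pose proof (IHM (d - 1)%Z); pose proof (IHM d); pose proof (IHM (d + 1)%Z); nra.
Qed.

Lemma free_walk_0_gt0 M : 0 < free_walk M 0.
Proof.
  induction M; simpl; [lra|].
  pose proof (free_walk_ge0 M (-1)); pose proof (free_walk_ge0 M 1); nra.
Qed.

Lemma free_walk_at_ge0 M k : 0 <= free_walk_at M k.
Proof. apply free_walk_ge0. Qed.

Lemma central_weight_gt0 M : 0 < central_weight M.
Proof.
  pose proof (free_walk_0_gt0 M); pose proof (free_walk_at_ge0 M 1).
  unfold central_weight, free_walk_at in *; simpl in *; lra.
Qed.

Lemma free_walk_at_le_central M k : free_walk_at M k <= central_weight M.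
Proof.
  pose proof (free_walk_at_ge0 M 0); pose proof (free_walk_at_ge0 M 1); unfold central_weight.
  induction k as [k IH] using lt_wf_ind.
  destruct k as [|[|k]]; [lra|lra|].
  assert (free_walk_at M (k + 2) <= free_walk_at M k).
  { pose proof (free_walk_at_gap M k); pose proof (pos_INR M); pose proof (pos_INR k).
    pose proof (free_walk_at_ge0 M k); pose proof (free_walk_at_ge0 M (S k)).
    assert (0 <= (INR k + 1) * (2 * free_walk_at M k + sigma * free_walk_at M (S k))
                 / (INR M + INR k + 2)).
    { assert (0 <= sigma * free_walk_at M (S k)) by (apply Rmult_le_pos; lra).
      apply Rdiv_le_0_compat; [apply Rmult_le_pos|]; lra. }
    lra. }
  replace (S (S k)) with (k + 2)%nat by lia; specialize (IH k ltac:(lia)); lra.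
Qed.

(* With G = (2y + sigma x) / (sigma y + 2x), (G - 1)/(G + 1) = (sigma-2)/(sigma+2) * (x-y)/(x+y);
   the factor (m+1)/(m+2) in front of G moves this Moebius image by at most 2/(m+2). *)
Lemma balance_step_bound x y m : 0 <= x -> 0 < y -> 0 <= m ->
  Rabs (((m + 1) * (2 * y + sigma * x) / (m + 2) - (sigma * y + 2 * x)) /
        ((m + 1) * (2 * y + sigma * x) / (m + 2) + (sigma * y + 2 * x)))
  <= Rabs ((sigma - 2) / (sigma + 2)) * Rabs ((x - y) / (x + y)) + 2 / (m + 2).
Proof.
  intros Hx Hy Hm.
  assert (0 <= sigma * x) by (apply Rmult_le_pos; lra).
  assert (0 < sigma * y) by (apply Rmult_lt_0_compat; lra).
  set (G := (2 * y + sigma * x) / (sigma * y + 2 * x)).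
  set (c := (m + 1) / (m + 2)).
  assert (HG : 0 < G) by (unfold G; apply Rdiv_lt_0_compat; lra).
  assert (Hc : 0 < c < 1) by (unfold c; split; [apply Rdiv_lt_0_compat | apply (Rdiv_lt_1 (m + 1) (m + 2))]; lra).
  assert (E1 : ((m + 1) * (2 * y + sigma * x) / (m + 2) - (sigma * y + 2 * x)) /
               ((m + 1) * (2 * y + sigma * x) / (m + 2) + (sigma * y + 2 * x))
             = (G - 1) / (G + 1) - 2 * (1 - c) * (G / ((c * G + 1) * (G + 1)))).
  { assert (0 < (m + 1) * (2 * y + sigma * x)) by (apply Rmult_lt_0_compat; lra).
    unfold c, G; field; repeat split; nra. }
  assert (E2 : (G - 1) / (G + 1) = ((sigma - 2) / (sigma + 2)) * ((x - y) / (x + y)))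
    by (unfold G; field; repeat split; nra).
  assert (B : 0 <= G / ((c * G + 1) * (G + 1)) <= 1)
    by (split; [apply Rdiv_le_0_compat | apply (Rdiv_le_1 G ((c * G + 1) * (G + 1)))]; nra).
  assert (Ec : 1 - c = 1 / (m + 2)) by (unfold c; field; lra).
  rewrite E1, E2, Ec; unfold Rminus at 1.
  eapply Rle_trans; [apply Rabs_triang|]; rewrite Rabs_mult, Rabs_Ropp.
  apply Rplus_le_compat_l; rewrite Rabs_pos_eq.
  - assert (0 < 1 / (m + 2)) by (apply Rdiv_lt_0_compat; lra).
    replace (2 / (m + 2)) with (2 * (1 / (m + 2)) * 1) by (field; lra).
    apply Rmult_le_compat_l; lra.
  - assert (0 < 1 / (m + 2)) by (apply Rdiv_lt_0_compat; lra).
    apply Rmult_le_pos; lra.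
Qed.

Definition balance (M : nat) : R :=
  (free_walk_at M 1 - free_walk_at M 0) / (free_walk_at M 1 + free_walk_at M 0).

Lemma balance_lim : is_lim_seq balance 0.
Proof.
  apply is_lim_seq_abs_0.
  apply (is_lim_seq_contraction _ (fun M => 2 / (INR M + 2)) (Rabs ((sigma - 2) / (sigma + 2)))).
  - split; [apply Rabs_pos|]; rewrite Rabs_div, (Rabs_pos_eq (sigma + 2)) by lra.
    apply (Rdiv_lt_1 (Rabs (sigma - 2)) (sigma + 2)); [lra|]; apply Rabs_def1; lra.
  - intros; apply Rabs_pos.
  - intros M; unfold balance.
    rewrite free_walk_at_S0, (free_walk_at_SS M 0).
    pose proof (free_walk_at_gap M 0) as Hgap; simpl (0 + 2)%nat in Hgap; rewrite INR_0 in Hgap.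
    pose proof (free_walk_at_ge0 M 1); pose proof (free_walk_0_gt0 M); pose proof (pos_INR M).
    replace (free_walk_at M 0 + sigma * free_walk_at M 1 + free_walk_at M 2)
      with ((INR M + 1) * (2 * free_walk_at M 0 + sigma * free_walk_at M 1) / (INR M + 2)).
    + apply balance_step_bound; [apply free_walk_at_ge0 | exact (free_walk_0_gt0 M) | lra].
    + replace (free_walk_at M 2) with
        (free_walk_at M 0 - (0 + 1) * (2 * free_walk_at M 0 + sigma * free_walk_at M 1) / (INR M + 0 + 2))
        by lra.
      field; lra.
  - replace (Finite 0) with (Finite (2 * 0)) by (f_equal; ring).
    apply is_lim_seq_scal_l_fin, is_lim_seq_inv_INR_plus.
Qed.

Definition walk_ratio (M k : nat) : R := free_walk_at M k / central_weight M.

Lemma walk_ratio_bounds M k : 0 <= walk_ratio M k <= 1.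
Proof.
  pose proof (central_weight_gt0 M); pose proof (free_walk_at_ge0 M k).
  pose proof (free_walk_at_le_central M k).
  split; [apply Rdiv_le_0_compat | apply (Rdiv_le_1 _ (central_weight M))]; lra.
Qed.

Lemma walk_ratio_rec M k :
  walk_ratio M (S (S k)) =
  (INR M - INR k) / (INR M + (INR k + 2)) * walk_ratio M k
  - sigma * (INR k + 1) * / (INR M + (INR k + 2)) * walk_ratio M (S k).
Proof.
  unfold walk_ratio, free_walk_at; pose proof (free_walk_endpoint_rec M (Z.of_nat k)) as H.
  rewrite <- INR_IZR_INZ in H.
  replace (Z.of_nat (S (S k))) with (Z.of_nat k + 2)%Z by lia.
  replace (Z.of_nat (S k)) with (Z.of_nat k + 1)%Z by lia.
  pose proof (central_weight_gt0 M); pose proof (pos_INR M); pose proof (pos_INR k).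
  assert (Hk2 : free_walk M (Z.of_nat k + 2) =
    ((INR M - INR k) * free_walk M (Z.of_nat k)
     - sigma * (INR k + 1) * free_walk M (Z.of_nat k + 1)) / (INR M + INR k + 2))
    by (field_simplify_eq; lra).
  rewrite Hk2; field; lra.
Qed.

Lemma walk_ratio_lim k : is_lim_seq (fun M => walk_ratio M k) (1 / 2).
Proof.
  assert (Hpair : is_lim_seq (fun M => walk_ratio M k) (1 / 2) /\
                  is_lim_seq (fun M => walk_ratio M (S k)) (1 / 2)).
  { induction k as [|k [IH1 IH2]].
    - assert (Hb : forall s, is_lim_seq (fun M => (1 + s * balance M) / 2) (1 / 2)).
      { intros s; replace (1 / 2) with ((1 + s * 0) / 2) by field.
        apply is_lim_seq_div'; [|apply is_lim_seq_const|lra].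
        apply is_lim_seq_plus'; [apply is_lim_seq_const | apply is_lim_seq_scal_l_fin, balance_lim]. }
      split; [apply is_lim_seq_ext with (2 := Hb (-1)) | apply is_lim_seq_ext with (2 := Hb 1)];
        intros M; pose proof (central_weight_gt0 M);
        unfold walk_ratio, balance, central_weight in *; field; lra.
    - split; [exact IH2|].
      apply is_lim_seq_ext with (1 := fun M => eq_sym (walk_ratio_rec M k)).
      replace (1 / 2) with (1 * (1 / 2) - sigma * (INR k + 1) * 0 * (1 / 2)) by ring.
      apply is_lim_seq_minus'; apply is_lim_seq_mult'; try assumption.
      + apply is_lim_seq_INR_ratio.
      + apply is_lim_seq_scal_l_fin, is_lim_seq_inv_INR_plus. }
  apply Hpair.
Qed.

Lemma central_weight_growth :
  is_lim_seq (fun M => central_weight (S M) / central_weight M) (2 + sigma).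
Proof.
  apply is_lim_seq_ext with
    (fun M => (sigma + 1) * walk_ratio M 0 + (sigma + 2) * walk_ratio M 1 + walk_ratio M 2).
  - intros M; pose proof (central_weight_gt0 M); unfold walk_ratio, central_weight in *.
    rewrite free_walk_at_S0, (free_walk_at_SS M 0); field; lra.
  - replace (2 + sigma) with ((sigma + 1) * (1 / 2) + (sigma + 2) * (1 / 2) + 1 / 2) by field.
    apply is_lim_seq_plus'; [apply is_lim_seq_plus'|];
      try apply is_lim_seq_scal_l_fin; apply walk_ratio_lim.
Qed.

Definition scaled_gap (M a j : nat) : R :=
  (INR M + 2) * (free_walk_at M a - free_walk_at M (a + 2 * j)) / central_weight M.

Lemma scaled_gap_S M a j : scaled_gap M a (S j) = scaled_gap M a j + scaled_gap M (a + 2 * j) 1.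
Proof.
  unfold scaled_gap; replace (a + 2 * S j)%nat with (a + 2 * j + 2 * 1)%nat by lia.
  unfold Rdiv; ring.
Qed.

Lemma scaled_gap_1 M k :
  scaled_gap M k 1 =
  (INR k + 1) * ((INR M + 2) / (INR M + INR k + 2)) * (2 * walk_ratio M k + sigma * walk_ratio M (S k)).
Proof.
  unfold scaled_gap, walk_ratio; rewrite Nat.mul_1_r, free_walk_at_gap.
  pose proof (central_weight_gt0 M); pose proof (pos_INR M); pose proof (pos_INR k).
  field; lra.
Qed.

Lemma scaled_gap_lim a j :
  is_lim_seq (fun M => scaled_gap M a j) ((2 + sigma) / 2 * (INR j * (INR a + INR j))).
Proof.
  induction j as [|j IH].
  - unfold scaled_gap; rewrite Nat.mul_0_r, Nat.add_0_r, INR_0.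
    apply is_lim_seq_ext with (fun _ => 0); [intros M; unfold Rdiv; ring|].
    replace ((2 + sigma) / 2 * (0 * (INR a + 0))) with 0 by ring; apply is_lim_seq_const.
  - apply is_lim_seq_ext with (1 := fun M => eq_sym (scaled_gap_S M a j)).
    replace ((2 + sigma) / 2 * (INR (S j) * (INR a + INR (S j)))) with
      ((2 + sigma) / 2 * (INR j * (INR a + INR j)) + (INR (a + 2 * j) + 1) * 1 * (2 * (1 / 2) + sigma * (1 / 2)))
      by (rewrite plus_INR, mult_INR, (S_INR j); simpl (INR 2); field).
    apply is_lim_seq_plus'; [exact IH|].
    apply is_lim_seq_ext with (1 := fun M => eq_sym (scaled_gap_1 M (a + 2 * j))).
    apply is_lim_seq_mult'; [apply is_lim_seq_scal_l_fin|].
    + apply is_lim_seq_ext with (fun M => (INR M + 2) / (INR M + (INR (a + 2 * j) + 2)));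
        [intros; rewrite Rplus_assoc; reflexivity | apply is_lim_seq_INR_ratio].
    + apply is_lim_seq_plus'; apply is_lim_seq_scal_l_fin, walk_ratio_lim.
Qed.

Lemma scaled_gap_bounds M a j :
  0 <= scaled_gap M a j <= (2 + sigma) * (INR j * (INR a + INR j)).
Proof.
  induction j as [|j IH].
  - unfold scaled_gap; rewrite Nat.mul_0_r, Nat.add_0_r; simpl; unfold Rdiv; split; right; ring.
  - rewrite scaled_gap_S, scaled_gap_1.
    pose proof (walk_ratio_bounds M (a + 2 * j)); pose proof (walk_ratio_bounds M (S (a + 2 * j))).
    pose proof (pos_INR M); pose proof (pos_INR (a + 2 * j)).
    assert (0 <= (INR M + 2) / (INR M + INR (a + 2 * j) + 2) <= 1)
      by (split; [apply Rdiv_le_0_compat | apply (Rdiv_le_1 (INR M + 2) (INR M + INR (a + 2 * j) + 2))]; lra).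
    assert (0 <= 2 * walk_ratio M (a + 2 * j) + sigma * walk_ratio M (S (a + 2 * j)) <= 2 + sigma) by nra.
    assert (0 <= (INR (a + 2 * j) + 1) * ((INR M + 2) / (INR M + INR (a + 2 * j) + 2))
                 * (2 * walk_ratio M (a + 2 * j) + sigma * walk_ratio M (S (a + 2 * j)))
               <= (INR (a + 2 * j) + 1) * (2 + sigma)).
    { split; [apply Rmult_le_pos; [apply Rmult_le_pos|]; lra|].
      rewrite Rmult_assoc; apply Rmult_le_compat_l; [lra|]; nra. }
    rewrite plus_INR, mult_INR, (S_INR j) in *; simpl (INR 2) in *; nra.
Qed.

Lemma killed_walk_scaled M h e :
  (INR M + 2) * killed_walk M h e / central_weight M = scaled_gap M (max h e - min h e) (S (min h e)).
Proof.
  rewrite killed_walk_reflection; unfold scaled_gap, free_walk_at.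
  destruct (Nat.le_ge_cases h e).
  - rewrite Nat.max_r, Nat.min_l by lia.
    do 3 f_equal; [f_equal|f_equal; f_equal]; lia.
  - rewrite Nat.max_l, Nat.min_r by lia.
    rewrite <- (free_walk_opp M (Z.of_nat e - Z.of_nat h)).
    do 3 f_equal; [f_equal|f_equal; f_equal]; lia.
Qed.

Lemma INR_min_max h e :
  INR (S (min h e)) * (INR (max h e - min h e) + INR (S (min h e))) = (INR h + 1) * (INR e + 1).
Proof.
  destruct (Nat.le_ge_cases h e); [rewrite Nat.max_r, Nat.min_l | rewrite Nat.max_l, Nat.min_r];
    try lia; rewrite minus_INR, S_INR by lia; ring.
Qed.

Lemma killed_walk_scaled_lim h e :
  is_lim_seq (fun M => (INR M + 2) * killed_walk M h e / central_weight M)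
    ((2 + sigma) / 2 * ((INR h + 1) * (INR e + 1))).
Proof.
  rewrite <- INR_min_max.
  apply is_lim_seq_ext with (1 := fun M => eq_sym (killed_walk_scaled M h e)).
  apply scaled_gap_lim.
Qed.

Lemma killed_walk_scaled_bounds M h e :
  0 <= (INR M + 2) * killed_walk M h e / central_weight M <= (2 + sigma) * ((INR h + 1) * (INR e + 1)).
Proof. rewrite <- INR_min_max, killed_walk_scaled; apply scaled_gap_bounds. Qed.

End FreeWalk.

(* phi_rho(n) = (rho^(n+1) - rho^-(n+1)) / (rho - 1/rho), written as a convolution of
   geometric sequences so that rho = 1, where it equals n + 1, needs no separate case. *)
Definition doob_weight (rho : R) (n : nat) : R := sum_f_R0 (fun j => rho ^ j * (/ rho) ^ (n - j)) n.

Lemma doob_weight_S rho n : doob_weight rho (S n) = / rho * doob_weight rho n + rho ^ S n.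
Proof.
  unfold doob_weight; rewrite tech5, Nat.sub_diag, pow_O, Rmult_1_r; f_equal.
  rewrite scal_sum; apply sum_eq; intros i Hi.
  replace (S n - i)%nat with (S (n - i)) by lia; simpl; ring.
Qed.

Lemma doob_weight_gt0 rho n : 0 < rho -> 0 < doob_weight rho n.
Proof.
  intros Hr; induction n.
  - unfold doob_weight; simpl; lra.
  - rewrite doob_weight_S; pose proof (Rinv_0_lt_compat rho Hr); pose proof (pow_lt rho (S n) Hr); nra.
Qed.

Lemma doob_weight_1 n : doob_weight 1 n = INR n + 1.
Proof.
  induction n; [unfold doob_weight; simpl; ring|].
  rewrite doob_weight_S, IHn, S_INR, pow1, Rinv_1; ring.
Qed.

Lemma doob_weight_closed rho n :
  rho <> 0 -> (rho - / rho) * doob_weight rho n = rho ^ S n - / rho ^ S n.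
Proof.
  intros Hr; induction n.
  - unfold doob_weight; simpl; field; auto.
  - rewrite doob_weight_S.
    transitivity (/ rho * ((rho - / rho) * doob_weight rho n) + (rho - / rho) * rho ^ S n); [ring|].
    rewrite IHn; simpl; field; split; auto; apply pow_nonzero; auto.
Qed.

Lemma is_series_doob_weight r0 rho : 0 < r0 -> 0 < rho -> r0 * rho < 1 -> r0 / rho < 1 ->
  is_series (fun h => r0 ^ h * doob_weight rho h) (/ (1 - r0 * rho) * / (1 - r0 / rho)).
Proof.
  intros H0 Hr H1 H2.
  assert (Hq : 0 < r0 / rho) by (apply Rdiv_lt_0_compat; lra).
  assert (Hp : 0 < r0 * rho) by (apply Rmult_lt_0_compat; lra).
  assert (Hgeom : forall q, 0 < q < 1 -> is_series (fun n => q ^ n) (/ (1 - q))).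
  { intros q Hq'; apply is_series_geom; rewrite Rabs_pos_eq; lra. }
  assert (Habs : forall q, 0 < q < 1 -> ex_series (fun n => Rabs (q ^ n))).
  { intros q Hq'; eapply ex_series_ext; [|eexists; apply (Hgeom q Hq')].
    intros n; rewrite Rabs_pos_eq; [reflexivity | apply pow_le; lra]. }
  eapply is_series_ext;
    [|apply (is_series_mult (fun n => (r0 * rho) ^ n) (fun n => (r0 / rho) ^ n));
      [apply Hgeom | apply Hgeom | apply Habs | apply Habs]; lra].
  intros h; unfold doob_weight; rewrite scal_sum; apply sum_eq; intros i Hi.
  replace h with (i + (h - i))%nat at 3 by lia; rewrite pow_add.
  unfold Rdiv; rewrite !Rpow_mult_distr; ring.
Qed.

Lemma ex_series_doob_weight_1 r0 : 0 < r0 < 1 -> ex_series (fun h => r0 ^ h * doob_weight 1 h).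
Proof. intros Hr; eexists; apply is_series_doob_weight; lra. Qed.

Definition has_profile (sigma rho0 rho : R) (F : nat -> nat -> R) : Prop :=
  exists (N : nat -> R) (kap : R) (D : nat -> R),
    (forall M, 0 < N M) /\ 0 < kap /\
    is_lim_seq (fun M => N (S M) / N M) (rho + / rho + sigma) /\
    (forall h, is_lim_seq (fun M => F M h / N M) (kap * doob_weight rho h)) /\
    (forall M h, Rabs (rho0 ^ h * (F M h / N M)) <= D h) /\ ex_series D.

Section ProfileAbove1.

Variables sigma rho0 rho1 : R.
Hypotheses (sigma_pos : 0 < sigma) (rho0_pos : 0 < rho0) (rho1_gt1 : 1 < rho1)
  (rho01_lt1 : rho0 * rho1 < 1).

Let mu := rho1 + / rho1 + sigma.
Let kap := (rho1 - / rho1) / rho1.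

Let inv_rho1_bounds : 0 < / rho1 < 1.
Proof. split; [apply Rinv_0_lt_compat | rewrite <- Rinv_1; apply Rinv_lt_contravar]; lra. Qed.

Let mu_gt : 2 + sigma < mu.
Proof.
  unfold mu; pose proof inv_rho1_bounds.
  assert (rho1 * (rho1 + / rho1) = rho1 * rho1 + 1) by (field; lra); nra.
Qed.

(* rho1^x - rho1^-(x+2) vanishes at x = -1, hence is an eigenfunction of the killed step;
   what remains of the boundary data rho1^x is bounded by 1. *)
Lemma transfer_pow_split M h :
  transfer sigma (pow rho1) M h =
  mu ^ M * (kap * doob_weight rho1 h) + (/ rho1) ^ 2 * transfer sigma (pow (/ rho1)) M h.
Proof.
  pose proof inv_rho1_bounds.
  set (psi := fun x : nat => rho1 ^ x - (/ rho1) ^ (x + 2)).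
  assert (Hpsi : forall x, psi x = kap * doob_weight rho1 x).
  { intros x; unfold kap, psi, Rdiv; rewrite Rmult_comm, <- Rmult_assoc.
    rewrite (Rmult_comm (doob_weight rho1 x)), doob_weight_closed by lra.
    rewrite pow_add, pow_inv; simpl; field; split; [lra | apply pow_nonzero; lra]. }
  rewrite <- Hpsi, <- (transfer_eigen sigma psi mu M h).
  - rewrite <- transfer_scal, <- transfer_add; apply transfer_ext; intros x.
    unfold psi; rewrite pow_add; ring.
  - unfold psi, mu; simpl; field; lra.
  - intros x; unfold psi, mu; rewrite !pow_add; simpl; field; lra.
Qed.

Lemma transfer_pow_above1_lim h :
  is_lim_seq (fun M => transfer sigma (pow rho1) M h / mu ^ M) (kap * doob_weight rho1 h).
Proof.
  pose proof inv_rho1_bounds; pose proof mu_gt.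
  set (q := (2 + sigma) / mu).
  assert (Hq : 0 <= q < 1) by (unfold q; split; [apply Rdiv_le_0_compat | apply (Rdiv_lt_1 (2 + sigma) mu)]; lra).
  apply is_lim_seq_ext with
    (fun M => kap * doob_weight rho1 h + (/ rho1) ^ 2 * (transfer sigma (pow (/ rho1)) M h / mu ^ M)).
  { intros M; rewrite transfer_pow_split; field; split; [lra | apply pow_nonzero; lra]. }
  replace (Finite (kap * doob_weight rho1 h))
    with (Finite (kap * doob_weight rho1 h + (/ rho1) ^ 2 * 0)) by (f_equal; ring).
  apply is_lim_seq_plus'; [apply is_lim_seq_const | apply is_lim_seq_scal_l_fin].
  apply is_lim_seq_le_le with (fun _ => 0) (fun M => q ^ M);
    [|apply is_lim_seq_const | apply is_lim_seq_geom; rewrite Rabs_pos_eq; lra].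
  intros M; pose proof (pow_lt mu M ltac:(lra)).
  pose proof (transfer_pow_bounded sigma ltac:(lra) (/ rho1) M h ltac:(lra)).
  unfold q, Rdiv; rewrite Rpow_mult_distr, pow_inv.
  split; [apply Rdiv_le_0_compat; lra|].
  apply Rmult_le_compat_r; [left; apply Rinv_0_lt_compat|]; lra.
Qed.

Lemma has_profile_above1 : has_profile sigma rho0 rho1 (transfer sigma (pow rho1)).
Proof.
  pose proof inv_rho1_bounds; pose proof mu_gt.
  assert (Hmu : forall M, 0 < mu ^ M) by (intros; apply pow_lt; lra).
  exists (pow mu), kap, (pow (rho0 * rho1)); repeat split.
  - exact Hmu.
  - unfold kap; apply Rdiv_lt_0_compat; lra.
  - apply is_lim_seq_ext with (fun _ => mu); [|apply is_lim_seq_const].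
    intros M; simpl; field; apply pow_nonzero; lra.
  - apply transfer_pow_above1_lim.
  - intros M h; specialize (Hmu M).
    pose proof (transfer_ge0 sigma ltac:(lra) (pow rho1) M h (fun x => pow_le rho1 x ltac:(lra))).
    assert (transfer sigma (pow rho1) M h <= mu ^ M * rho1 ^ h).
    { apply transfer_le_geom; [lra|lra|]; intros x; split; [apply pow_le|]; lra. }
    rewrite Rabs_pos_eq, Rpow_mult_distr.
    + apply Rmult_le_compat_l; [apply pow_le; lra|].
      apply (Rmult_le_reg_r (mu ^ M)); [lra|]; unfold Rdiv; rewrite Rmult_assoc, Rinv_l; lra.
    + apply Rmult_le_pos; [apply pow_le; lra | apply Rdiv_le_0_compat; lra].
  - exists (/ (1 - rho0 * rho1)); apply is_series_geom.
    assert (0 < rho0 * rho1) by (apply Rmult_lt_0_compat; lra); rewrite Rabs_pos_eq; lra.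
Qed.

End ProfileAbove1.

Section ProfileAt1.

Variables sigma rho0 : R.
Hypotheses (sigma_pos : 0 < sigma) (rho0_pos : 0 < rho0) (rho0_lt1 : rho0 < 1).

Lemma transfer_pow1_scaled M h :
  transfer sigma (pow 1) M h / central_weight sigma M =
  sum_f_R0 (fun j => walk_ratio sigma M j + walk_ratio sigma M (S j)) h.
Proof.
  rewrite transfer_pow1; unfold Rdiv; rewrite Rmult_comm, scal_sum; apply sum_eq.
  intros j _; unfold walk_ratio, Rdiv; ring.
Qed.

Lemma has_profile_at1 : has_profile sigma rho0 1 (transfer sigma (pow 1)).
Proof.
  exists (central_weight sigma), 1, (fun h => 2 * (rho0 ^ h * doob_weight 1 h)); repeat split.
  - apply central_weight_gt0, sigma_pos.
  - lra.
  - rewrite Rinv_1; replace (1 + 1 + sigma) with (2 + sigma) by ring.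
    apply central_weight_growth, sigma_pos.
  - intros h; apply is_lim_seq_ext with (1 := fun M => eq_sym (transfer_pow1_scaled M h)).
    replace (1 * doob_weight 1 h) with (sum_f_R0 (fun _ => 1 / 2 + 1 / 2) h)
      by (rewrite sum_cte, doob_weight_1, S_INR; field).
    apply is_lim_seq_sum_f_R0; intros j.
    apply is_lim_seq_plus'; apply walk_ratio_lim, sigma_pos.
  - intros M h; rewrite transfer_pow1_scaled, doob_weight_1.
    assert (Hsum : 0 <= sum_f_R0 (fun j => walk_ratio sigma M j + walk_ratio sigma M (S j)) h
                    <= sum_f_R0 (fun _ => 2) h).
    { split; [apply cond_pos_sum | apply sum_Rle]; intros j; try intros _;
        pose proof (walk_ratio_bounds sigma sigma_pos M j);
        pose proof (walk_ratio_bounds sigma sigma_pos M (S j)); lra. }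
    rewrite sum_cte, S_INR in Hsum; pose proof (pow_le rho0 h ltac:(lra)).
    rewrite Rabs_pos_eq by (apply Rmult_le_pos; lra).
    rewrite (Rmult_comm 2), Rmult_assoc; apply Rmult_le_compat_l; lra.
  - exact (ex_series_scal_l 2 _ (ex_series_doob_weight_1 rho0 ltac:(lra))).
Qed.

End ProfileAt1.

Section ProfileBelow1.

Variables sigma rho0 rho1 : R.
Hypotheses (sigma_pos : 0 < sigma) (rho0_pos : 0 < rho0) (rho0_lt1 : rho0 < 1)
  (rho1_pos : 0 < rho1) (rho1_lt1 : rho1 < 1).

Let norm_weight (M : nat) : R := central_weight sigma M / (INR M + 2).
Let scaled_killed (M h e : nat) : R := (INR M + 2) * killed_walk sigma M h e / central_weight sigma M.
Let K1 := Series (fun e => rho1 ^ e * doob_weight 1 e).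

Let ex_series_K1 : ex_series (fun e => rho1 ^ e * doob_weight 1 e).
Proof. apply ex_series_doob_weight_1; lra. Qed.

Let scaled_killed_dominated M h e :
  Rabs (rho1 ^ e * scaled_killed M h e) <= (2 + sigma) * (INR h + 1) * (rho1 ^ e * doob_weight 1 e).
Proof.
  pose proof (killed_walk_scaled_bounds sigma sigma_pos M h e); pose proof (pow_le rho1 e ltac:(lra)).
  rewrite doob_weight_1, Rabs_pos_eq by (apply Rmult_le_pos; unfold scaled_killed; lra).
  unfold scaled_killed; nra.
Qed.

Lemma transfer_pow_below1_scaled M h :
  transfer sigma (pow rho1) M h / norm_weight M = Series (fun e => rho1 ^ e * scaled_killed M h e).
Proof.
  rewrite <- (is_series_unique _ _ (transfer_as_series sigma (pow rho1) M h)).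
  pose proof (pos_INR M); pose proof (central_weight_gt0 sigma sigma_pos M).
  unfold norm_weight, scaled_killed, Rdiv; rewrite <- Series_scal_r.
  apply Series_ext; intros e; field; lra.
Qed.

Lemma transfer_pow_below1_lim h :
  is_lim_seq (fun M => transfer sigma (pow rho1) M h / norm_weight M)
    ((2 + sigma) / 2 * K1 * doob_weight 1 h).
Proof.
  apply is_lim_seq_ext with (1 := fun M => eq_sym (transfer_pow_below1_scaled M h)).
  replace ((2 + sigma) / 2 * K1 * doob_weight 1 h) with
    (Series (fun e => rho1 ^ e * ((2 + sigma) / 2 * ((INR h + 1) * (INR e + 1))))).
  - apply (is_lim_seq_Series_dominated _ _ (fun e => (2 + sigma) * (INR h + 1) * (rho1 ^ e * doob_weight 1 e))).
    + intros e; apply is_lim_seq_scal_l_fin, killed_walk_scaled_lim, sigma_pos.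
    + intros M e; apply scaled_killed_dominated.
    + exact (ex_series_scal_l _ _ ex_series_K1).
  - unfold K1; rewrite doob_weight_1, Rmult_comm, <- !Series_scal_l; apply Series_ext; intros e.
    rewrite doob_weight_1; ring.
Qed.

Lemma transfer_pow_below1_bounds M h :
  0 <= transfer sigma (pow rho1) M h / norm_weight M <= (2 + sigma) * (INR h + 1) * K1.
Proof.
  rewrite transfer_pow_below1_scaled.
  assert (Hterm : forall e, 0 <= rho1 ^ e * scaled_killed M h e
                            <= (2 + sigma) * (INR h + 1) * (rho1 ^ e * doob_weight 1 e)).
  { intros e; pose proof (scaled_killed_dominated M h e).
    pose proof (killed_walk_scaled_bounds sigma sigma_pos M h e); pose proof (pow_le rho1 e ltac:(lra)).
    assert (0 <= rho1 ^ e * scaled_killed M h e) by (apply Rmult_le_pos; unfold scaled_killed; lra).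
    rewrite Rabs_pos_eq in *; lra. }
  split.
  - apply Series_ge0; [intros e; apply Hterm|].
    apply (ex_series_le (fun e => rho1 ^ e * scaled_killed M h e) _ (scaled_killed_dominated M h)).
    exact (ex_series_scal_l _ _ ex_series_K1).
  - unfold K1; rewrite <- Series_scal_l; apply Series_le; [apply Hterm|].
    exact (ex_series_scal_l _ _ ex_series_K1).
Qed.

Lemma has_profile_below1 : has_profile sigma rho0 1 (transfer sigma (pow rho1)).
Proof.
  assert (HK1 : 0 < K1).
  { unfold K1; rewrite (is_series_unique _ _ (is_series_doob_weight rho1 1 ltac:(lra) ltac:(lra) ltac:(lra) ltac:(lra))).
    apply Rmult_lt_0_compat; apply Rinv_0_lt_compat; lra. }
  assert (HN : forall M, 0 < norm_weight M).
  { intros M; pose proof (pos_INR M); pose proof (central_weight_gt0 sigma sigma_pos M).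
    apply Rdiv_lt_0_compat; lra. }
  exists norm_weight, ((2 + sigma) / 2 * K1), (fun h => (2 + sigma) * K1 * (rho0 ^ h * doob_weight 1 h)).
  repeat split.
  - exact HN.
  - apply Rmult_lt_0_compat; lra.
  - rewrite Rinv_1; replace (1 + 1 + sigma) with ((2 + sigma) * 1) by ring.
    apply is_lim_seq_ext with
      (fun M => central_weight sigma (S M) / central_weight sigma M * ((INR M + 2) / (INR M + 3))).
    + intros M; unfold norm_weight; rewrite S_INR; pose proof (pos_INR M).
      pose proof (central_weight_gt0 sigma sigma_pos M); pose proof (central_weight_gt0 sigma sigma_pos (S M)).
      field; repeat split; lra.
    + apply is_lim_seq_mult'; [apply central_weight_growth, sigma_pos | apply is_lim_seq_INR_ratio].
  - apply transfer_pow_below1_lim.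
  - intros M h; pose proof (transfer_pow_below1_bounds M h); pose proof (pow_le rho0 h ltac:(lra)).
    rewrite doob_weight_1, Rabs_pos_eq by (apply Rmult_le_pos; lra).
    replace ((2 + sigma) * K1 * (rho0 ^ h * (INR h + 1)))
      with (rho0 ^ h * ((2 + sigma) * (INR h + 1) * K1)) by ring.
    apply Rmult_le_compat_l; lra.
  - exact (ex_series_scal_l _ _ (ex_series_doob_weight_1 rho0 ltac:(lra))).
Qed.

End ProfileBelow1.

Lemma has_profile_Rmax sigma rho0 rho1 :
  0 < sigma -> 0 < rho0 -> rho0 < 1 -> 0 < rho1 -> rho0 * rho1 < 1 ->
  has_profile sigma rho0 (Rmax 1 rho1) (transfer sigma (pow rho1)).
Proof.
  intros Hs H0 H0' H1 H01; destruct (Rlt_le_dec 1 rho1).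
  - rewrite Rmax_right by lra; apply has_profile_above1; assumption.
  - rewrite Rmax_left by lra; destruct (Req_dec rho1 1) as [->|].
    + apply has_profile_at1; assumption.
    + apply has_profile_below1; try assumption; lra.
Qed.

(* The numerator is F_(L-K)(m) and the denominator the partition function at time L:
   their ratio picks up one factor 1/lambda per step of the prefix. *)
Lemma has_profile_fdd_lim sigma rho0 rho F K m :
  0 < sigma -> 0 < rho -> has_profile sigma rho0 rho F ->
  0 < Series (fun h => rho0 ^ h * doob_weight rho h) ->
  is_lim_seq (fun L => F (L - K)%nat m / Series (fun h => rho0 ^ h * F L h))
    (doob_weight rho m / ((rho + / rho + sigma) ^ K * Series (fun h => rho0 ^ h * doob_weight rho h))).
Proof.
  intros Hs Hr [N [kap [D [HN [Hkap [Hrat [HF [HD HDs]]]]]]]] HS.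
  set (lam := rho + / rho + sigma) in *.
  set (SS := Series (fun h => rho0 ^ h * doob_weight rho h)) in *.
  assert (Hlam : 0 < lam) by (unfold lam; pose proof (Rinv_0_lt_compat rho Hr); lra).
  assert (Hpart : is_lim_seq (fun L => Series (fun h => rho0 ^ h * F (L + K)%nat h) / N (L + K)%nat) (kap * SS)).
  { apply (is_lim_seq_incr_n (fun L => Series (fun h => rho0 ^ h * F L h) / N L)).
    apply is_lim_seq_ext with (fun L => Series (fun h => rho0 ^ h * (F L h / N L))).
    - intros L; unfold Rdiv; rewrite <- Series_scal_r; apply Series_ext; intros h; ring.
    - unfold SS; rewrite <- Series_scal_l.
      apply (is_lim_seq_Series_dominated (fun L h => rho0 ^ h * (F L h / N L)) _ D); try assumption.
      intros h; rewrite Rmult_comm, Rmult_assoc; apply is_lim_seq_scal_l_fin.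
      rewrite Rmult_comm; apply HF. }
  assert (Hpos : eventually (fun L => 0 < Series (fun h => rho0 ^ h * F (L + K)%nat h) / N (L + K)%nat)).
  { assert (Hk : 0 < kap * SS) by (apply Rmult_lt_0_compat; lra).
    apply is_lim_seq_spec in Hpart; destruct (Hpart (mkposreal _ Hk)) as [L0 HL0].
    exists L0; intros L HL; specialize (HL0 L HL); simpl in HL0; apply Rabs_def2 in HL0; lra. }
  apply (is_lim_seq_incr_n _ K).
  apply is_lim_seq_ext_loc with
    (fun L => F L m / N L * (N L / N (L + K)%nat) / (Series (fun h => rho0 ^ h * F (L + K)%nat h) / N (L + K)%nat)).
  - destruct Hpos as [L0 HL0]; exists L0; intros L HL; specialize (HL0 L HL).
    rewrite Nat.add_sub; pose proof (HN L); pose proof (HN (L + K)%nat).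
    assert (0 < Series (fun h => rho0 ^ h * F (L + K)%nat h)).
    { apply (Rmult_lt_reg_r (/ N (L + K)%nat)); [apply Rinv_0_lt_compat; lra|]; rewrite Rmult_0_l; exact HL0. }
    field; repeat split; lra.
  - replace (doob_weight rho m / (lam ^ K * SS)) with (kap * doob_weight rho m * / lam ^ K / (kap * SS))
      by (field; repeat split; try lra; apply pow_nonzero; lra).
    apply is_lim_seq_div'; [apply is_lim_seq_mult'; [apply HF | apply is_lim_seq_ratio_shift] | exact Hpart | ];
      try assumption; apply Rgt_not_eq, Rmult_lt_0_compat; lra.
Qed.

Lemma doob_weight_div rho n k :
  1 < rho -> doob_weight rho n / doob_weight rho k = (rho ^ S n - / rho ^ S n) / (rho ^ S k - / rho ^ S k).
Proof.
  intros Hr; rewrite <- !doob_weight_closed by lra.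
  pose proof (doob_weight_gt0 rho k ltac:(lra)); field; repeat split; nra.
Qed.

Lemma Qker_doob rho sigma a b : 0 < sigma -> 1 <= rho ->
  Qker rho sigma a b =
  step_weight sigma a b * doob_weight rho b / ((rho + / rho + sigma) * doob_weight rho a).
Proof.
  intros Hs Hr.
  pose proof (doob_weight_gt0 rho a ltac:(lra)); pose proof (pos_INR a); pose proof (pos_INR b).
  assert (Hlam : 0 < rho + / rho + sigma) by (pose proof (Rinv_0_lt_compat rho ltac:(lra)); lra).
  replace (step_weight sigma a b * doob_weight rho b / ((rho + / rho + sigma) * doob_weight rho a))
    with (/ (rho + / rho + sigma) * step_weight sigma a b * (doob_weight rho b / doob_weight rho a))
    by (field; repeat split; try lra; nra).
  unfold Qker, step_weight; destruct (Rle_dec rho 1) as [Hle | Hgt].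
  - replace rho with 1 in * by lra; rewrite !doob_weight_1, Rinv_1.
    destruct (Nat.eqb_spec b (S a)); [|destruct (Nat.eqb_spec b a); [|destruct (Nat.eqb_spec (S b) a)]];
      subst; rewrite ?plus_INR, ?S_INR, ?INR_0 in *; field; repeat split; lra.
  - rewrite doob_weight_div by lra.
    destruct (Nat.eqb_spec b (S a)); [|destruct (Nat.eqb_spec b a); [|destruct (Nat.eqb_spec (S b) a)]];
      subst.
    + replace (a + 2)%nat with (S (S a)) by lia; rewrite Nat.add_1_r; ring.
    + assert (1 < rho ^ S a) by (apply Rlt_pow_R1; [lra | lia]).
      field; repeat split; nra.
    + rewrite Nat.add_1_r; ring.
    + ring.
Qed.

Lemma chain_prod_ext (Q1 Q2 : nat -> nat -> R) n K :
  (forall a b, Q1 a b = Q2 a b) -> chain_prod Q1 n K = chain_prod Q2 n K.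
Proof. intros H; induction K; simpl; [reflexivity|]; rewrite IHK, H; reflexivity. Qed.

Lemma chain_prod_telescope (t : nat -> nat -> R) (phi : nat -> R) lam n K :
  (forall k, phi k <> 0) -> lam <> 0 ->
  chain_prod (fun a b => t a b * phi b / (lam * phi a)) n K =
  chain_prod t n K * phi (n K) / (lam ^ K * phi (n 0%nat)).
Proof.
  intros Hp Hl; induction K; simpl; [field; auto|].
  rewrite IHK; field; repeat split; auto; apply pow_nonzero; auto.
Qed.

Lemma Z0law_doob r0 rho n : 0 < rho ->
  Z0law r0 rho n = (1 - r0 * rho) * (1 - r0 / rho) * r0 ^ n * doob_weight rho n.
Proof.
  intros Hr; unfold Z0law, doob_weight, geom; rewrite scal_sum; apply sum_eq; intros i Hi.
  replace n with (i + (n - i))%nat at 3 by lia; rewrite pow_add.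
  unfold Rdiv; rewrite !Rpow_mult_distr; ring.
Qed.

Lemma Zfdd_doob sigma rho0 rho K n :
  0 < sigma -> 0 < rho0 -> 1 <= rho -> rho0 * rho < 1 -> rho0 / rho < 1 ->
  Zfdd sigma rho0 rho K n =
  rho0 ^ n 0%nat * chain_prod (step_weight sigma) n K
  * (doob_weight rho (n K) / ((rho + / rho + sigma) ^ K * Series (fun h => rho0 ^ h * doob_weight rho h))).
Proof.
  intros Hs H0 Hr H1 H2.
  assert (Hphi : forall k, doob_weight rho k <> 0) by (intros k; apply Rgt_not_eq, doob_weight_gt0; lra).
  assert (Hlam : rho + / rho + sigma <> 0) by (pose proof (Rinv_0_lt_compat rho ltac:(lra)); lra).
  unfold Zfdd; rewrite Z0law_doob by lra.
  rewrite (chain_prod_ext _ _ n K (fun a b => Qker_doob rho sigma a b Hs Hr)), chain_prod_telescope by assumption.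
  rewrite (is_series_unique _ _ (is_series_doob_weight rho0 rho H0 ltac:(lra) H1 H2)).
  assert (rho0 < rho) by (apply (Rdiv_lt_1 rho0 rho); lra).
  field; repeat split; try apply pow_nonzero; auto; nra.
Qed.

Theorem corollary1p3 (sigma rho0 rho1 : R)
  (Hsigma : 0 < sigma) (H0a : 0 < rho0) (H0b : rho0 < 1) (H1 : 0 < rho1)
  (H01 : rho0 * rho1 < 1) :
  forall (K : nat) (n : nat -> nat),
    is_lim_seq (fun L => PrL sigma rho0 rho1 L K n)
      (Zfdd sigma rho0 (Rmax 1 rho1) K n).
Proof.
  intros K n.
  set (rho := Rmax 1 rho1).
  assert (Hrho : 1 <= rho) by apply Rmax_l.
  assert (Hr0 : rho0 * rho < 1) by (unfold rho, Rmax; destruct (Rle_dec 1 rho1); lra).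
  assert (Hr1 : rho0 / rho < 1) by (apply (Rdiv_lt_1 rho0 rho); lra).
  rewrite Zfdd_doob by assumption.
  apply is_lim_seq_ext_loc with
    (fun L => rho0 ^ n 0%nat * chain_prod (step_weight sigma) n K
              * (transfer sigma (pow rho1) (L - K) (n K)
                 / Series (fun h => rho0 ^ h * transfer sigma (pow rho1) L h))).
  { exists K; intros L HL; rewrite PrL_eq by exact HL; unfold Rdiv; ring. }
  apply is_lim_seq_scal_l_fin, has_profile_fdd_lim; try lra.
  - apply has_profile_Rmax; assumption.
  - rewrite (is_series_unique _ _ (is_series_doob_weight rho0 rho H0a ltac:(lra) Hr0 Hr1)).
    apply Rmult_lt_0_compat; apply Rinv_0_lt_compat; lra.
Qed.
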